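(* Let $p=P_{s,k,g,l}<+\infty$ and let $S$ be an $(s,k,p)$-schedule with $\mathrm{prevr}_{k-1}(r_l)<C_{\max}(S)\le r_l$ and at most $g$ gaps with respect to $[r_s,r_l)$. Then (a) every execution interval of $k$ in $S$ is an internal execution interval with respect to $[r_s,r_l)$, and if $p>0$ then $S$ has exactly $g$ gaps with respect to $[r_s,r_l)$; (b) if $[u,t)$ is an execution interval of $k$ in $S$, $h$ is the number of gaps of $S$ before $u$, and $q$ is the amount of job $k$ scheduled by $S$ in $[r_s,u)$, then $u=U_{s,k,h}(q)$.
   Context: Time is discrete (slots $[t,t+1)$). There are $n$ jobs, job $j$ with integer processing time $p_j\ge1$, release time $r_j$, deadline $d_j$; jobs are indexed so that $d_1<\dots<d_n$, release times are pairwise distinct, and the instance is feasible. A (partial, preemptive) schedule assigns to each slot at most one job so that each job it schedules receives exactly $p_j$ slots in $[r_j,d_j)$, with the earliest-deadline property (whenever busy at slot $t$, run the released, not yet completed scheduled job of smallest deadline). $C_{\max}(S)$ is its completion time. For $s\in\{1,\dots,n\}$, $k\in\{0,\dots,n\}$, an $(s,k)$-schedule is a schedule $S$ with $C_{\max}(S)\le d_k$ scheduling exactly the jobs $j\le k$ with $r_s\le r_j<C_{\max}(S)$; the empty schedule counts, with $C_{\max}=r_s$. Gaps: maximal idle intervals between blocks (maximal busy intervals), plus the idle interval from $r_s$ to the first block if nonempty; gaps with respect to $[r_s,t)$ (for $t\ge C_{\max}(S)$) additionally include $[C_{\max}(S),t)$ if nonempty. For $p\ge0$, an $(s,k,p)$-schedule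 is an $(s,k)$-schedule for the modified instance with $r_k$ replaced by $\max\{r_s,r_k\}$ and $p_k$ by $p$; $U_{s,k,g}(p)$ is the maximum completion time of an $(s,k,p)$-schedule with at most $g$ gaps. $\mathrm{prevr}_{k'}(t)=\max\{r_j:j\le k',\ r_j<t\}$ ($-\infty$ if none). For $k\ge1$, $1\le l\le k-1$ with $r_l\ge r_s$, $P_{s,k,g,l}$ is the minimum $p\ge0$ for which there is an $(s,k,p)$-schedule $S$ with $\mathrm{prevr}_{k-1}(r_l)<C_{\max}(S)\le r_l$ and at most $g$ gaps with respect to $[r_s,r_l)$ ($+\infty$ if none). An execution interval of $k$ in $S$ is an inclusion-maximal interval $[u,v)$ all of whose slots execute $k$; for $C_{\max}(S)\le t$, it is internal with respect to $[r_s,t)$ if (i) slot $v$ is not idle or $v=t$, and (ii) slot $u-1$ is not idle or $u=r_s$. *)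

(* Time is discrete: slot t is [t,t+1), t : nat.
   Jobs are indexed 1..n; a (partial) schedule is S : nat -> option nat,
   S t = Some j meaning slot t executes job j, None meaning idle. *)
From mathcomp Require Import all_boot.
Set Implicit Arguments. Unset Strict Implicit. Unset Printing Implicit Defensive.

Definition schedule := nat -> option nat.

Definition count_slots (S : schedule) (j a b : nat) : nat :=
  \sum_(a <= x < b) (S x == Some j : nat).

(* A valid preemptive schedule of exactly the jobs in J (instance p r d),
   with the earliest-deadline property. *)
Definition valid_sched (p r d : nat -> nat) (J : pred nat) (S : schedule) : Prop :=
  [/\ (forall t j, S t = Some j -> J j /\ r j <= t < d j),
      (forall j, J j -> count_slots S j (r j) (d j) = p j) &
      (forall t j, S t = Some j ->
         forall i, J i -> r i <= t -> count_slots S i (r i) t < p i -> d j <= d i)].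

(* C is the completion time C_max(S) of S, with C_max = a (= r_s) for the empty schedule *)
Definition is_cmax (S : schedule) (a C : nat) : Prop :=
  (forall x, S x <> None -> x < C) /\
  ((C = a /\ forall x, S x = None) \/ (0 < C /\ S C.-1 <> None)).

Definition feasible (n : nat) (p r d : nat -> nat) : Prop :=
  exists S : schedule,
    (forall t j, S t = Some j -> (1 <= j <= n) /\ r j <= t < d j) /\
    (forall j, 1 <= j <= n -> count_slots S j (r j) (d j) = p j).

Definition instance (n : nat) (p r d : nat -> nat) : Prop :=
  [/\ (forall j, 1 <= j <= n -> 1 <= p j),
      (forall i j, 1 <= i -> i < j -> j <= n -> d i < d j),
      (forall i j, 1 <= i <= n -> 1 <= j <= n -> r i = r j -> i = j) &
      feasible n p r d].

Definition sk_sched (p r d : nat -> nat) (s k : nat) (S : schedule) (C : nat) : Prop :=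
  [/\ is_cmax S (r s) C, C <= d k &
      valid_sched p r d (fun j => (1 <= j <= k) && (r s <= r j < C)) S].

Definition modr (r : nat -> nat) (s k : nat) : nat -> nat :=
  fun j => if j == k then maxn (r s) (r k) else r j.
Definition modp (p : nat -> nat) (k q : nat) : nat -> nat :=
  fun j => if j == k then q else p j.

Definition skp_sched (p r d : nat -> nat) (s k q : nat) (S : schedule) (C : nat) : Prop :=
  sk_sched (modp p k q) (modr r s k) d s k S C.

(* number of gaps of S with respect to [a,b): maximal idle intervals inside
   [a,b), counted by their first slot *)
Definition gaps (S : schedule) (a b : nat) : nat :=
  \sum_(a <= x < b) ((S x == None) && ((x == a) || (S x.-1 != None)) : nat).

(* IsU ... g q u  <->  u = U_{s,k,g}(q) *)
Definition IsU (p r d : nat -> nat) (s k g q u : nat) : Prop :=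
  (exists S, skp_sched p r d s k q S u /\ gaps S (r s) u <= g) /\
  (forall S C, skp_sched p r d s k q S C -> gaps S (r s) C <= g -> C <= u).

(* prevr_{k'}(t) = max { r_j : 1 <= j <= k', r_j < t }, None standing for -infinity *)
Definition prevr (r : nat -> nat) (k' t : nat) : option nat :=
  let sq := [seq r j | j <- iota 1 k' & r j < t] in
  if sq is [::] then None else Some (\max_(x <- sq) x).

Definition opt_lt (o : option nat) (c : nat) : bool :=
  if o is Some v then v < c else true.

Definition P_sched (p r d : nat -> nat) (s k g l q : nat) (S : schedule) (C : nat) : Prop :=
  [/\ skp_sched p r d s k q S C, opt_lt (prevr r k.-1 (r l)) C, C <= r l &
      gaps S (r s) (r l) <= g].

(* IsP ... q  <->  q = P_{s,k,g,l} < +infinity *)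
Definition IsP (p r d : nat -> nat) (s k g l q : nat) : Prop :=
  (exists S C, P_sched p r d s k g l q S C) /\
  (forall q', q' < q -> forall S C, ~ P_sched p r d s k g l q' S C).

Definition exec_interval (S : schedule) (k u v : nat) : Prop :=
  [/\ u < v, (forall x, u <= x < v -> S x = Some k),
      (u = 0 \/ S u.-1 <> Some k) & S v <> Some k].

Definition internal (S : schedule) (a t u v : nat) : Prop :=
  (S v <> None \/ v = t) /\ (S u.-1 <> None \/ u = a).

From mathcomp Require Import all_boot zify.
Set Implicit Arguments. Unset Strict Implicit. Unset Printing Implicit Defensive.

(* P_{s,k,g,l} is the least amount of [k] such a schedule can carry, so any
   modification of [S] that stays in the window and keeps at most [g] gaps
   while running less of [k] is absurd.
   (a) Unscheduling the first or last slot of a non-internal execution interval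
   of [k] creates no gap, and unscheduling any slot of [k] creates at most one.
   (b) Cutting [S] at [u] gives an (s,k,q')-schedule with [h] gaps, [q'] the
   amount of [k] before [u], so [u <= U_{s,k,h}(q')]. Conversely let [S2] be
   such a schedule completing after [u]. Every job of higher priority than [k]
   released before [t] is released and completed by [S] before [u]. Follow [S2]
   up to a slot [x0], then run these jobs earliest deadline first and [k] on
   [[x0, t)], then follow [S]. If [S2] completes by [t], take [x0 = C_max(S2)];
   otherwise choose [x0] by a discrete intermediate value argument so that the
   work of these jobs left in [S2] at [x0] fills [[x0, t)] exactly, deadlines
   being met because earliest deadline first dominates [S2] on every deadline
   prefix. The result has no more gaps than [S] but runs less of [k]. *)

Lemma count_slots_cat S j a b c : a <= b -> b <= c ->
  count_slots S j a c = count_slots S j a b + count_slots S j b c.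
Proof. by move=> ab bc; rewrite /count_slots (@big_cat_nat _ _ _ b). Qed.

Lemma count_slotsSr S j a b : a <= b ->
  count_slots S j a b.+1 = count_slots S j a b + (S b == Some j).
Proof. by move=> ab; rewrite /count_slots big_nat_recr. Qed.

Lemma eq_count_slots S S' j a b :
  (forall x, a <= x < b -> (S x == Some j) = (S' x == Some j)) ->
  count_slots S j a b = count_slots S' j a b.
Proof. by move=> h; apply: eq_big_nat => x /h ->. Qed.

Lemma count_slots_ext S S' j a b : (forall x, a <= x < b -> S x = S' x) ->
  count_slots S j a b = count_slots S' j a b.
Proof. by move=> h; apply: eq_count_slots => x /h ->. Qed.

Lemma count_slots_eq0 S j a b : (forall x, a <= x < b -> S x <> Some j) ->
  count_slots S j a b = 0.
Proof.
move=> h; rewrite /count_slots big1_seq // => x; rewrite mem_index_iota => /h.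
by case: eqP.
Qed.

Lemma count_slots_const S j a b : (forall x, a <= x < b -> S x = Some j) ->
  count_slots S j a b = b - a.
Proof.
move=> h; rewrite /count_slots (eq_big_nat _ _ (F2 := fun _ => 1)).
  by rewrite sum_nat_const_nat muln1.
by move=> x /h ->; rewrite eqxx.
Qed.

Lemma count_slots_gt0 S j a b : 0 < count_slots S j a b ->
  exists2 x, a <= x < b & S x = Some j.
Proof.
move=> h; case: (boolP [exists x : 'I_b, (a <= x) && (S x == Some j)]).
  by case/existsP=> x /andP [ax /eqP e]; exists x; rewrite ?ax ?ltn_ord.
rewrite negb_exists => /forallP hn.
move: h; rewrite count_slots_eq0 // => x /andP [ax xb] e.
by move: (hn (Ordinal xb)); rewrite /= ax e eqxx.
Qed.

Lemma count_slots_mono S j a b c : b <= c ->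
  count_slots S j a b <= count_slots S j a c.
Proof.
move=> bc; case: (leqP a b) => ab.
  by rewrite (count_slots_cat S j ab bc) leq_addr.
by rewrite /count_slots big_geq ?(ltnW ab).
Qed.

Lemma count_slots_from0 S j a b : (forall x, S x = Some j -> a <= x) ->
  count_slots S j a b = count_slots S j 0 b.
Proof.
move=> h; case: (leqP a b) => ab.
  rewrite (@count_slots_cat S j 0 a b) // (@count_slots_eq0 S j 0 a) // => x /andP [_ xa] /h.
  by rewrite leqNgt xa.
rewrite /count_slots big_geq ?(ltnW ab) // -/(count_slots S j 0 b) count_slots_eq0 //.
by move=> x /andP [_ xb] /h; lia.
Qed.

Lemma count_slots_until S j a b e : (forall x, S x = Some j -> x < e) -> e <= b ->
  count_slots S j a b = count_slots S j a e.
Proof.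
move=> h eb; case: (leqP a e) => ae.
  rewrite (count_slots_cat S j ae eb) (@count_slots_eq0 S j e b) ?addn0 // => x /andP [ex _] /h.
  by rewrite ltnNge ex.
rewrite /count_slots (big_geq (ltnW ae)) -/(count_slots S j a b) count_slots_eq0 //.
by move=> x /andP [ax _] /h; lia.
Qed.

Lemma count_slots_le_total S j b e : (forall x, S x = Some j -> x < e) ->
  count_slots S j 0 b <= count_slots S j 0 e.
Proof.
move=> h; case: (leqP b e) => be; first exact: count_slots_mono.
by rewrite (@count_slots_until S j 0 b e h (ltnW be)).
Qed.

Lemma sum_eq_Some_le1 (o : option nat) lo hi (P : pred nat) :
  \sum_(lo <= i < hi | P i) (o == Some i : nat) <= 1.
Proof.
case: o => [j|]; last by rewrite big1.
apply: leq_trans (_ : \sum_(i <- index_iota lo hi | i == j) 1 <= _).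
  rewrite big_mkcond [X in _ <= X]big_mkcond /=; apply: leq_sum => i _.
  by case: (P i); case: eqP => // [[->]]; rewrite eqxx.
rewrite sum1_count (count_uniq_mem _ (iota_uniq _ _)); by case: (_ \in _).
Qed.

Lemma sum_count_slots_le S lo hi (P : pred nat) a b :
  \sum_(lo <= i < hi | P i) count_slots S i a b <= b - a.
Proof.
rewrite /count_slots exchange_big_nat /=.
apply: leq_trans (_ : \sum_(a <= x < b) 1 <= _); last by rewrite sum_nat_const_nat muln1.
by apply: leq_sum => x _; apply: sum_eq_Some_le1.
Qed.

Lemma leq_term_sum (F : nat -> nat) (P : pred nat) lo hi j :
  lo <= j < hi -> P j -> F j <= \sum_(lo <= i < hi | P i) F i.
Proof.
move=> hj Pj; rewrite big_mkcond (bigD1_seq j) ?mem_index_iota ?iota_uniq //=.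
by rewrite Pj leq_addr.
Qed.

Lemma sum_eq0_term (F : nat -> nat) (P : pred nat) lo hi j :
  \sum_(lo <= i < hi | P i) F i = 0 -> lo <= j < hi -> P j -> F j = 0.
Proof. by move=> h hj Pj; apply/eqP; rewrite -leqn0 -h leq_term_sum. Qed.

Lemma nat_ivt (f : nat -> nat) a b v : (forall y, f y.+1 <= (f y).+1) -> a <= b ->
  f a <= v -> v <= f b -> exists2 y, a <= y <= b & f y = v.
Proof.
move=> hf; elim: b => [|b IH] ab fa vb.
  by exists 0; [lia | have e : a = 0 by lia]; rewrite e in fa; lia.
case: (leqP v (f b)) => vfb.
  case: (eqVneq a b.+1) => [eab|neab].
    by exists b.+1; [lia | subst; lia].
  have [|y hy fy] := IH _ fa vfb; first by move/eqP: neab; lia.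
  by exists y; [lia | done].
by exists b.+1; [lia | have := hf b; lia].
Qed.

Definition gap_start (S : schedule) a x : nat :=
  (S x == None) && ((x == a) || (S x.-1 != None)).

Lemma gapsE S a b : gaps S a b = \sum_(a <= x < b) gap_start S a x.
Proof. by []. Qed.

Lemma gap_start_le1 S a x : gap_start S a x <= 1.
Proof. by rewrite /gap_start; case: (_ && _). Qed.

Lemma gaps_cat S a b c : a <= b -> b <= c ->
  gaps S a c = gaps S a b + \sum_(b <= x < c) gap_start S a x.
Proof. by move=> ab bc; rewrite /gaps (@big_cat_nat _ _ _ b). Qed.

Lemma gaps_mono S a b c : b <= c -> gaps S a b <= gaps S a c.
Proof.
move=> bc; case: (leqP a b) => ab.
  by rewrite (gaps_cat S ab bc) leq_addr.
by rewrite /gaps big_geq ?(ltnW ab).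
Qed.

Definition unschedule (S : schedule) y : schedule :=
  fun x => if x == y then None else S x.

Lemma count_slots_unschedule S j y a b : S y = Some j -> a <= y < b ->
  count_slots S j a b = (count_slots (unschedule S y) j a b).+1.
Proof.
move=> e /andP [ay yb].
have cut T := @count_slots_cat T j a y b ay (ltnW yb).
have cut1 T := @count_slots_cat T j y y.+1 b (leqnSn y) yb.
rewrite cut cut1 (cut (unschedule S y)) (cut1 (unschedule S y)).
have -> : count_slots (unschedule S y) j a y = count_slots S j a y.
  by apply: count_slots_ext => x /andP [_ xy]; rewrite /unschedule (ltn_eqF xy).
have -> : count_slots (unschedule S y) j y.+1 b = count_slots S j y.+1 b.
  by apply: count_slots_ext => x /andP [yx _]; rewrite /unschedule (gtn_eqF yx).
rewrite /count_slots !big_nat1 /unschedule eqxx e eqxx /=; lia.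
Qed.

Lemma count_slots_unschedule_other S j y a b : S y <> Some j ->
  count_slots (unschedule S y) j a b = count_slots S j a b.
Proof.
move=> ne; apply: eq_count_slots => x _; rewrite /unschedule.
by case: (eqVneq x y) => [->|//]; apply/esym/negbTE/eqP.
Qed.

Lemma sum_le_off1 (F G : nat -> nat) a b y c :
  (forall x, x != y -> F x <= G x) -> F y <= G y + c ->
  \sum_(a <= x < b) F x <= \sum_(a <= x < b) G x + c.
Proof.
move=> h hy.
apply: leq_trans (_ : \sum_(a <= x < b) (G x + c * (x == y)) <= _).
  apply: leq_sum => x _; case: (eqVneq x y) => [->|ne]; first by rewrite muln1.
  by rewrite muln0 addn0 h.
rewrite big_split /= leq_add2l -big_distrr /=.
apply: leq_trans (_ : c * 1 <= _); last by rewrite muln1.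
rewrite leq_mul2l; apply/orP; right.
apply: leq_trans (sum_eq_Some_le1 (Some y) a b predT); rewrite leq_eqVlt; apply/orP; left.
by apply/eqP; apply: eq_bigr => x _; rewrite eq_sym; case: eqP => [->|ne]; case: eqP => // [[]].
Qed.

Lemma gap_start_unschedule S a y x : x != y -> x != y.+1 ->
  gap_start (unschedule S y) a x = gap_start S a x.
Proof.
move=> n1 n2; rewrite /gap_start /unschedule (negbTE n1).
case: (eqVneq x.-1 y) => [e|] //; exfalso.
by case: x n1 n2 e => [|x] /= n1 n2 e; [rewrite -e eqxx in n1 | rewrite e eqxx in n2].
Qed.

Lemma gap_start_unscheduleS S a y : y.+1 != a -> gap_start (unschedule S y) a y.+1 = 0.
Proof. by move=> ne; rewrite /gap_start /unschedule /= eqxx (negbTE ne) /=; case: (_ == None). Qed.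

Lemma gap_start_unschedule_le S a y x : a <= y -> x != y ->
  gap_start (unschedule S y) a x <= gap_start S a x.
Proof.
move=> ay ne; case: (eqVneq x y.+1) => [->|ne2].
  by rewrite gap_start_unscheduleS //; apply/eqP; lia.
by rewrite gap_start_unschedule.
Qed.

Lemma gaps_unschedule S a b y : a <= y -> gaps (unschedule S y) a b <= gaps S a b + 1.
Proof.
move=> ay; rewrite !gapsE; apply: (@sum_le_off1 _ _ a b y).
  by move=> x; apply: gap_start_unschedule_le.
by rewrite (leq_trans (gap_start_le1 _ _ _)) // leq_addl.
Qed.

(* Unscheduling the first slot of a block just lengthens the preceding gap. *)
Lemma gaps_unschedule_first S a b y : a < y -> S y.-1 = None ->
  gaps (unschedule S y) a b <= gaps S a b.
Proof.
move=> ay hy; rewrite !gapsE -[X in _ <= X]addn0; apply: (@sum_le_off1 _ _ a b y).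
  by move=> x; apply: gap_start_unschedule_le; lia.
rewrite addn0 /gap_start /unschedule eqxx /=.
have -> : (y == a) = false by apply/eqP; lia.
have -> : (y.-1 == y) = false by apply/eqP; lia.
by rewrite hy.
Qed.

Lemma sum_nat_around (F : nat -> nat) a b y : a <= y -> y.+2 <= b ->
  \sum_(a <= x < b) F x =
  \sum_(a <= x < y) F x + F y + F y.+1 + \sum_(y.+2 <= x < b) F x.
Proof.
move=> ay yb; rewrite (@big_cat_nat _ _ _ y) //; last by lia.
rewrite (@big_cat_nat _ _ _ y.+2 y) //; last by lia.
rewrite (@big_cat_nat _ _ _ y.+1 y y.+2) // !big_nat1 /=; lia.
Qed.

(* Unscheduling the last slot of a block moves the start of the following gap. *)
Lemma gaps_unschedule_last S a b y : a <= y -> y.+1 < b -> S y <> None -> S y.+1 = None ->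
  gaps (unschedule S y) a b <= gaps S a b.
Proof.
move=> ay yb hy hy1; rewrite !gapsE !(sum_nat_around _ ay yb).
have e1 : forall x, a <= x < y -> gap_start (unschedule S y) a x = gap_start S a x.
  by move=> x /andP [_ xy]; rewrite gap_start_unschedule //; apply/eqP; lia.
have e2 : forall x, y.+2 <= x < b -> gap_start (unschedule S y) a x = gap_start S a x.
  by move=> x /andP [yx _]; rewrite gap_start_unschedule //; apply/eqP; lia.
rewrite (eq_big_nat _ _ e1) (eq_big_nat _ _ e2) gap_start_unscheduleS; last by apply/eqP; lia.
have -> : gap_start S a y.+1 = 1.
  by rewrite /gap_start hy1 /=; case E: (S y) hy => [j|] // _; rewrite orbT.
have := gap_start_le1 (unschedule S y) a y; lia.
Qed.

Lemma modr_s r s k : modr r s k s = r s.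
Proof. by rewrite /modr; case: eqP => // ->; rewrite maxnn. Qed.

Lemma modr_ne r s k j : j != k -> modr r s k j = r j.
Proof. by rewrite /modr => /negbTE ->. Qed.

Lemma modp_k p k q : modp p k q k = q.
Proof. by rewrite /modp eqxx. Qed.

Lemma modp_ne p k q j : j != k -> modp p k q j = p j.
Proof. by rewrite /modp => /negbTE ->. Qed.

Lemma instance_d_lt n p r d i j : instance n p r d -> 0 < i -> i < j -> j <= n -> d i < d j.
Proof. by case=> _ hd _ _; apply: hd. Qed.

Lemma instance_d_mono n p r d i j : instance n p r d -> 0 < i -> i <= j -> j <= n ->
  d i <= d j.
Proof.
move=> inst i0; rewrite leq_eqVlt => /orP [/eqP -> //|ij jn].
exact/ltnW/(instance_d_lt inst).
Qed.

Lemma valid_sched_eq_jobs p r d (J J' : pred nat) S : J =1 J' ->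
  valid_sched p r d J S -> valid_sched p r d J' S.
Proof.
move=> e [h1 h2 h3]; split.
- by move=> t j /h1 []; rewrite e.
- by move=> j; rewrite -e; apply: h2.
- by move=> t j ej i; rewrite -e; apply: h3.
Qed.

Lemma valid_sched_modp p r d (J : pred nat) k q q' S : (forall j, J j -> j != k) ->
  valid_sched (modp p k q) r d J S -> valid_sched (modp p k q') r d J S.
Proof.
move=> hJ [h1 h2 h3]; split=> //.
- by move=> j Jj; rewrite modp_ne ?hJ // h2 // modp_ne ?hJ.
- by move=> t j e i Ji; rewrite modp_ne ?hJ //; move: (h3 t j e i Ji); rewrite modp_ne ?hJ.
Qed.

Definition skp_jobs r s k C : pred nat :=
  fun j => (1 <= j <= k) && (r s <= modr r s k j < C).

Lemma skp_schedP p r d s k q S C : skp_sched p r d s k q S C ->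
  [/\ forall y, S y <> None -> r s <= y < C, C <= d k, r s <= C &
      valid_sched (modp p k q) (modr r s k) d (skp_jobs r s k C) S].
Proof.
case=> [hc hCd hv].
have hv' : valid_sched (modp p k q) (modr r s k) d (skp_jobs r s k C) S.
  by apply: valid_sched_eq_jobs hv => j; rewrite /skp_jobs modr_s.
have busy : forall y, S y <> None -> r s <= y < C.
  move=> y hy; case: hc => hb _; rewrite hb // andbT.
  case E: (S y) hy => [j|] // _; case: hv' => h1 _ _.
  by case: (h1 _ _ E) => /andP [_ /andP [h _]] /andP [h' _]; apply: leq_trans h h'.
split=> //; case: hc => _ [[-> _]|[_ hC]]; first by rewrite modr_s.
by have /andP [h _] := busy _ hC; lia.
Qed.

Lemma skp_sched_slot p r d s k q S C y j : skp_sched p r d s k q S C -> S y = Some j ->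
  skp_jobs r s k C j /\ modr r s k j <= y < d j.
Proof. by case/skp_schedP=> _ _ _ [h1 _ _]; apply: h1. Qed.

Lemma is_cmax_exists (Q : schedule) a B :
  (forall y, Q y <> None -> a <= y < B) -> a <= B ->
  exists2 C, is_cmax Q a C & a <= C <= B.
Proof.
have idle : (forall y, Q y <> None -> a <= y < a) -> forall x, Q x = None.
  by move=> h x; case e: (Q x) => //; have := h x; rewrite e => /(_ ltac:(by [])); lia.
elim: B => [|B IH] h aB.
  have a0 : a = 0 by lia.
  subst a; exists 0; last by [].
  by split; [move=> x /h | left; split; last exact: idle].
case: (eqVneq a B.+1) => [eaB|neaB].
  subst a; exists B.+1; last by lia.
  by split; [move=> x /h; lia | left; split; last exact: idle].
case e: (Q B) => [j|].
  exists B.+1; last by lia.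
  by split; [move=> x /h; lia | right; split=> //=; rewrite e].
have [|C hc hb] := IH _ (ltac:(move/eqP: neaB; lia) : a <= B); last by exists C => //; lia.
move=> y qy; have := h y qy; case: (eqVneq y B) => [ey|ney]; last by lia.
by move: qy; rewrite ey e.
Qed.

Lemma bigmax_seq_in (s : seq nat) : s != [::] -> \max_(x <- s) x \in s.
Proof.
elim: s => // x s IH _; rewrite big_cons in_cons.
case: s IH => [|y s] IH; first by rewrite big_nil maxn0 eqxx.
by case: (leqP (\max_(z <- y :: s) z) x) => hm; rewrite ?eqxx // IH ?orbT.
Qed.

Lemma prevr_some r k' t v : prevr r k' t = Some v ->
  exists2 j, 1 <= j <= k' & r j < t /\ v = r j.
Proof.
rewrite /prevr; set sq := [seq _ | _ <- _ & _].
case E: sq => [|x s] //= [<-]; have: \max_(y <- x :: s) y \in sq.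
  by rewrite E bigmax_seq_in.
case/mapP=> j; rewrite mem_filter mem_iota => /andP [rj hj] ->.
by exists j; [lia | split].
Qed.

(* The [prevr] condition survives cutting at the actual completion time because
   the job realising [prevr] is among the scheduled jobs and has positive
   processing time. *)
Lemma P_sched_of_valid n p r d s k g l q C (Q : schedule) :
  instance n p r d -> 1 <= k <= n -> r s <= C ->
  C <= d k -> C <= r l -> opt_lt (prevr r k.-1 (r l)) C ->
  (forall y, Q y <> None -> r s <= y < C) ->
  valid_sched (modp p k q) (modr r s k) d (skp_jobs r s k C) Q ->
  gaps Q (r s) (r l) <= g ->
  exists C', P_sched p r d s k g l q Q C'.
Proof.
move=> inst hk hsC hCd hCl hpr hQ [h1 h2 h3] hg.
have [C' hc /andP [hsC' hC'C]] := is_cmax_exists hQ hsC.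
have busy : forall y, Q y <> None -> y < C' by case: hc.
have JJ : forall j, skp_jobs r s k C' j -> skp_jobs r s k C j.
  by move=> j; rewrite /skp_jobs => /andP [-> /andP [-> hj]]; rewrite (leq_trans hj hC'C).
exists C'; split=> //; last exact: leq_trans hCl.
- split; [by rewrite modr_s | exact: leq_trans hCd |].
  apply: (@valid_sched_eq_jobs _ _ _ (skp_jobs r s k C')).
    by move=> j; rewrite /skp_jobs modr_s.
  split.
  + move=> t j e; have [/andP [j1 /andP [hsj _]] hw] := h1 t j e.
    rewrite /skp_jobs j1 hsj.
    split=> //; case/andP: hw => hw _; rewrite (leq_ltn_trans hw) //.
    by apply: busy; rewrite e.
  + by move=> j /JJ; apply: h2.
  + by move=> t j e i /JJ; apply: h3 e i.
- move: hpr; case E: (prevr r k.-1 (r l)) => [v|] //= hv.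
  have [j hj [hjl ev]] := prevr_some E; subst v.
  case: (ltnP (r j) (r s)) => hjs; first exact: leq_trans hjs hsC'.
  have jk : j != k by apply/eqP => ejk; subst j; case/andP: hk => h _; lia.
  have Jj : skp_jobs r s k C j by rewrite /skp_jobs modr_ne // hjs hv; case/andP: hk; lia.
  have := h2 j Jj; rewrite modp_ne // modr_ne // => hc2.
  have : 0 < count_slots Q j (r j) (d j).
    by rewrite hc2; case: inst => hp _ _ _; apply: hp; case/andP: hk; lia.
  case/count_slots_gt0 => x /andP [hx _] ex.
  by apply: leq_ltn_trans hx _; apply: busy; rewrite ex.
Qed.

(** * Minimality of [P] *)

Definition P_minimal p r d s k g l q : Prop :=
  forall q', q' < q -> forall S C, ~ P_sched p r d s k g l q' S C.

Lemma P_sched_unschedule_k n p r d s k g l q S C y :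
  instance n p r d -> 1 <= k <= n -> P_sched p r d s k g l q S C -> S y = Some k ->
  gaps (unschedule S y) (r s) (r l) <= g ->
  0 < q /\ exists C', P_sched p r d s k g l q.-1 (unschedule S y) C'.
Proof.
move=> inst hk [hS hpr hCl _] ey hg.
have [busy hCd hsC [h1 h2 h3]] := skp_schedP hS.
have [Jk yk] := h1 _ _ ey.
have hq : count_slots S k (modr r s k k) (d k) = q by rewrite h2 // modp_k.
have cnt := count_slots_unschedule ey yk.
split; first by rewrite -hq cnt.
apply: (@P_sched_of_valid n p r d s k g l q.-1 C) => //.
- by move=> x; rewrite /unschedule; case: eqP => // _ /busy.
split.
- by move=> t j; rewrite /unschedule; case: eqP => // _ /h1.
- move=> j Jj; case: (eqVneq j k) => [->|njk]; first by rewrite modp_k -hq cnt.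
  rewrite count_slots_unschedule_other ?ey; last by case=> e; rewrite e eqxx in njk.
  by rewrite h2 // !modp_ne.
- move=> t j; rewrite /unschedule; case: eqP => // _ etj i Ji hri.
  case: (eqVneq i k) => [->|nik] hc.
    have [/andP [/andP [j1 jk] _] _] := h1 _ _ etj.
    by apply: (instance_d_mono inst j1 jk); case/andP: hk.
  apply: (h3 _ _ etj i Ji hri).
  move: hc; rewrite count_slots_unschedule_other ?modp_ne // ey.
  by case=> e; rewrite e eqxx in nik.
Qed.

Lemma P_sched_busy p r d s k g l q S C y : P_sched p r d s k g l q S C ->
  S y <> None -> r s <= y < C.
Proof. by case=> /skp_schedP [busy _ _ _] *; apply: busy. Qed.

Section MinimalAmount.

Variables (n : nat) (p r d : nat -> nat) (s k g l q : nat) (S : schedule) (C : nat).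
Hypotheses (inst : instance n p r d) (hk : 1 <= k <= n).
Hypotheses (hmin : P_minimal p r d s k g l q) (hP : P_sched p r d s k g l q S C).

(* Otherwise [S] minus one slot of [k] would witness a smaller value of [P]. *)
Lemma P_minimal_unschedule y : S y = Some k -> g < gaps (unschedule S y) (r s) (r l).
Proof.
move=> ey; rewrite ltnNge; apply/negP => hg.
have [q0 [C' hP']] := P_sched_unschedule_k inst hk hP ey hg.
exact: (hmin (ltac:(lia) : q.-1 < q) hP').
Qed.

Lemma P_minimal_internal u v : exec_interval S k u v -> internal S (r s) (r l) u v.
Proof.
case: hP => _ _ hCl hg [huv hin _ _].
split.
- case E: (S v) => [j|]; [by left | right].
  apply/eqP/negPn/negP => nvl; have ey : S v.-1 = Some k by apply: hin; lia.
  have /andP [h h'] := P_sched_busy hP (ltac:(by rewrite ey) : S v.-1 <> None).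
  have := P_minimal_unschedule ey; rewrite ltnNge => /negP; apply.
  apply: leq_trans hg; apply: gaps_unschedule_last => //.
  + by move/eqP: nvl; lia.
  + by rewrite ey.
  + by rewrite prednK //; lia.
- case E: (S u.-1) => [j|]; [by left | right].
  apply/eqP/negPn/negP => nus; have ey : S u = Some k by apply: hin; lia.
  have /andP [h _] := P_sched_busy hP (ltac:(by rewrite ey) : S u <> None).
  have := P_minimal_unschedule ey; rewrite ltnNge => /negP; apply.
  by apply: leq_trans hg; apply: gaps_unschedule_first => //; move/eqP: nus; lia.
Qed.

(* With [q > 0] some slot of [k] can be unscheduled at the cost of one gap. *)
Lemma P_minimal_gaps : 0 < q -> gaps S (r s) (r l) = g.
Proof.
case: (hP) => hS _ _ hg q0; apply/eqP; rewrite eqn_leq hg /= leqNgt; apply/negP => hlt.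
have [busy _ _ [_ h2 _]] := skp_schedP hS.
case: (boolP (skp_jobs r s k C k)) => Jk.
  have : 0 < count_slots S k (modr r s k k) (d k) by rewrite h2 // modp_k.
  case/count_slots_gt0 => y /andP [hy1 _] ey.
  have := P_minimal_unschedule ey; rewrite ltnNge => /negP; apply.
  apply: leq_trans (gaps_unschedule _ _ _) _; last by rewrite addn1.
  by have /andP [] := busy y ltac:(by rewrite ey).
apply: (hmin (ltac:(lia) : q.-1 < q) (S := S) (C := C)).
case: hP => [[hc hCd hv] hpr hCl hg'].
split=> //; split=> //; apply: valid_sched_modp hv => j Jj.
by apply/eqP => ejk; subst j; rewrite modr_s in Jj; rewrite /skp_jobs Jj in Jk.
Qed.

End MinimalAmount.

Lemma skp_count_from0 p r d s k q S C j b : skp_sched p r d s k q S C ->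
  count_slots S j (modr r s k j) b = count_slots S j 0 b.
Proof. by move=> hS; apply: count_slots_from0 => x /(skp_sched_slot hS) [_ /andP []]. Qed.

Lemma skp_sched_job_count p r d s k q S C i :
  skp_sched p r d s k q S C -> skp_jobs r s k C i -> i != k ->
  [/\ forall b, count_slots S i 0 b <= p i,
      count_slots S i 0 C = p i & count_slots S i 0 (d i) = p i].
Proof.
move=> hS Ji nik; have [busy _ _ [h1 h2 _]] := skp_schedP hS.
have sl x : S x = Some i -> r i <= x < d i /\ x < C.
  move=> e; have [_] := h1 _ _ e; rewrite modr_ne // => hw; split=> //.
  by have /andP [] := busy x ltac:(by rewrite e).
have hd : count_slots S i 0 (d i) = p i.
  by rewrite -(skp_count_from0 _ _ hS) h2 // modp_ne.
have ltd x : S x = Some i -> x < d i by case/sl => /andP [].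
split=> [b||//]; first by rewrite -hd; apply: count_slots_le_total.
rewrite -(@count_slots_until S i 0 (maxn C (d i)) C) ?leq_maxl //; last by move=> x /sl [].
by rewrite (count_slots_until _ ltd) ?leq_maxr.
Qed.

Lemma skp_sched_k_count p r d s k q S C b : skp_sched p r d s k q S C ->
  count_slots S k 0 b <= q.
Proof.
move=> hS; have [_ _ _ [h1 h2 _]] := skp_schedP hS.
case: (boolP (skp_jobs r s k C k)) => Jk.
  rewrite -(modp_k p k q) -h2 // (skp_count_from0 _ _ hS).
  by apply: count_slots_le_total => x /h1 [_ /andP []].
by rewrite count_slots_eq0 // => x _ /h1 [Jk' _]; rewrite Jk' in Jk.
Qed.

(** * Earliest-deadline-first fill *)

(* Among the jobs of [A] (all in [[1, k)]) released by [y] and unfinished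
   according to the amounts [c], the one of smallest index, hence of earliest
   deadline; [k] if there is none. *)
Definition edf_pick (A : pred nat) (p r : nat -> nat) (k y : nat) (c : nat -> nat) : nat :=
  let m := find (fun i => A i && (r i <= y) && (c i < p i)) (iota 1 k.-1) in
  if m < k.-1 then m.+1 else k.

Lemma eq_edf_pick A p r k y c c' : c =1 c' -> edf_pick A p r k y c = edf_pick A p r k y c'.
Proof.
move=> h; rewrite /edf_pick (@eq_find _ _ (fun i => A i && (r i <= y) && (c' i < p i))) //.
by move=> i; rewrite h.
Qed.

Lemma edf_pickP (A : pred nat) p r k y c : (forall i, A i -> 0 < i < k) ->
  let j := edf_pick A p r k y c in
  (j = k /\ forall i, A i -> r i <= y -> p i <= c i) \/
  [/\ A j, r j <= y, c j < p j & forall i, A i -> r i <= y -> c i < p i -> j <= i].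
Proof.
move=> hA; rewrite /edf_pick.
set P := (fun i => A i && (r i <= y) && (c i < p i)).
case: ltnP => hm.
  right; have := @nth_find _ 0 P (iota 1 k.-1).
  rewrite has_find size_iota => /(_ hm); rewrite nth_iota // add1n /P => /andP [/andP [-> ->] ->].
  split=> // i Ai ri ci; rewrite ltnNge; apply/negP => lt.
  have hi := hA i Ai.
  have := @before_find _ 0 P (iota 1 k.-1) i.-1; rewrite nth_iota; last by lia.
  by rewrite !add1n (prednK (ltac:(lia) : 0 < i)) /P Ai ri ci => /(_ lt).
left; split=> // i Ai ri; rewrite leqNgt; apply/negP => ci.
have : ~~ has P (iota 1 k.-1) by rewrite has_find size_iota -leqNgt.
move/hasPn => /(_ i) h.
have hi : i \in iota 1 k.-1 by rewrite mem_iota; have := hA i Ai; lia.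
by have := h hi; rewrite /P Ai ri ci.
Qed.

(* A schedule built slot by slot, each slot chosen from the amounts already
   processed. *)
Fixpoint step_counts (step : nat -> (nat -> nat) -> option nat) (y : nat) : nat -> nat :=
  match y with
  | 0 => fun _ => 0
  | y'.+1 => let c := step_counts step y' in fun i => c i + (step y' c == Some i)
  end.

Definition step_sched step : schedule := fun y => step y (step_counts step y).

Lemma step_countsE step y i : step_counts step y i = count_slots (step_sched step) i 0 y.
Proof.
elim: y => [|y IH]; first by rewrite /count_slots big_geq.
by rewrite count_slotsSr // -IH.
Qed.

Definition splice (S2 S : schedule) x0 t (A : pred nat) (p r : nat -> nat) k : schedule :=
  step_sched (fun y c =>
    if y < x0 then S2 y else if y < t then Some (edf_pick A p r k y c) else S y).

Section SpliceE.

Variables (S2 S : schedule) (x0 t : nat) (A : pred nat) (p r : nat -> nat) (k : nat).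
Let N := splice S2 S x0 t A p r k.

Lemma splice_prefix y : y < x0 -> N y = S2 y.
Proof. by move=> hy; rewrite /N /splice /step_sched hy. Qed.

Lemma splice_fill y : x0 <= y < t ->
  N y = Some (edf_pick A p r k y (fun i => count_slots N i 0 y)).
Proof.
case/andP=> hy hy'; rewrite {1}/N /splice /step_sched ltnNge hy /= hy'.
by congr Some; apply: eq_edf_pick => i; rewrite step_countsE.
Qed.

Lemma splice_suffix y : x0 <= t -> t <= y -> N y = S y.
Proof.
by move=> hx0t hy; rewrite /N /splice /step_sched ltnNge (leq_trans hx0t hy) /= ltnNge hy.
Qed.

End SpliceE.

(** * Execution intervals of [k] *)

Definition prior_jobs (r : nat -> nat) (s k t : nat) : pred nat :=
  fun i => (0 < i < k) && (r s <= r i < t).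

Lemma prior_jobs_ltk r s k t i : prior_jobs r s k t i -> 0 < i < k.
Proof. by case/andP. Qed.

Lemma prior_jobs_neqk r s k t i : prior_jobs r s k t i -> i != k.
Proof. by case/andP => /andP [_ /ltn_eqF ->]. Qed.

Lemma skp_jobs_prior r s k C t i : i != k -> skp_jobs r s k C i -> r i < t ->
  prior_jobs r s k t i.
Proof.
move=> nik.
rewrite /skp_jobs /prior_jobs modr_ne // => /andP [/andP [i0 ik] /andP [si _]] it.
by rewrite /= i0 si it ltn_neqAle nik ik.
Qed.

Definition truncate (S : schedule) u : schedule := fun x => if x < u then S x else None.

Section ExecInterval.

Variables (n : nat) (p r d : nat -> nat) (s k g l q : nat) (S : schedule) (C u t : nat).
Hypotheses (inst : instance n p r d) (hk : 0 < k <= n).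
Hypothesis hP : P_sched p r d s k g l q S C.
Hypotheses (hut : u < t) (hin : forall x, u <= x < t -> S x = Some k).

Let hS : skp_sched p r d s k q S C. Proof. by case: hP. Qed.
Let eu : S u = Some k. Proof. by apply: hin; rewrite leqnn. Qed.

Lemma exec_release : r s <= modr r s k k <= u.
Proof.
have [_ /andP [hku _]] := skp_sched_slot hS eu.
by rewrite hku andbT /modr eqxx leq_maxl.
Qed.

Lemma exec_before_cmax : t <= C.
Proof.
have ht1 : S t.-1 = Some k by apply: hin; lia.
by have /andP [_ htC] := P_sched_busy hP (ltac:(by rewrite ht1) : S t.-1 <> None); lia.
Qed.

(* By the earliest-deadline rule, a job of higher priority than [k] released
   before [t] cannot be pending while [k] runs. *)
Lemma prior_jobs_done i : prior_jobs r s k t i ->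
  [/\ r i < u, count_slots S i (r i) u = p i & forall x, S x = Some i -> x < u].
Proof.
case/andP=> hi /andP [hsi hit].
have [_ _ _ [h1 h2 h3]] := skp_schedP hS.
have nik : i != k by apply/eqP => e; subst; lia.
have htC := exec_before_cmax.
have Ji : skp_jobs r s k C i by rewrite /skp_jobs modr_ne // hsi; lia.
have pi1 : 0 < p i by case: inst => hp _ _ _; apply: hp; lia.
have dik : d i < d k by apply: (instance_d_lt inst); lia.
have pend x : S x = Some k -> r i <= x -> p i <= count_slots S i (r i) x.
  move=> ex rx; rewrite leqNgt; apply/negP => hlt.
  by have := h3 _ _ ex i Ji; rewrite modr_ne // modp_ne // => /(_ rx hlt); lia.
have hru : r i < u.
  rewrite ltnNge; apply/negP => ur.
  have := pend _ (hin (ltac:(lia) : u <= r i < t)) (leqnn _).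
  by rewrite /count_slots big_geq //; lia.
have slots_d x : S x = Some i -> x < d i by case/h1 => _; rewrite modr_ne // => /andP [].
have hpi : count_slots S i (r i) (d i) = p i by have := h2 i Ji; rewrite modr_ne // modp_ne.
have hcu : count_slots S i (r i) u = p i.
  apply/eqP; rewrite eqn_leq pend ?(ltnW hru) // andbT -hpi.
  case: (leqP u (d i)) => ud; first exact: count_slots_mono.
  by rewrite (count_slots_until _ slots_d (ltnW ud)).
split=> // x ex; rewrite ltnNge; apply/negP => ux.
have [_] := h1 _ _ ex; rewrite modr_ne // => /andP [rx xd].
have := @count_slots_mono S i (r i) x.+1 (d i) xd.
rewrite count_slotsSr // ex eqxx hpi.
have := @count_slots_mono S i (r i) u x ux; lia.
Qed.

Lemma prior_jobs_count_from a i : prior_jobs r s k t i -> a <= r i ->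
  count_slots S i a u = p i.
Proof.
move=> Ai ai; have [_ hc _] := prior_jobs_done Ai.
have ge x : S x = Some i -> r i <= x.
  by case/(skp_sched_slot hS) => _; rewrite modr_ne ?(prior_jobs_neqk Ai) // => /andP [].
rewrite -hc (count_slots_from0 _ ge) (@count_slots_from0 S i a) // => x /ge.
exact: leq_trans ai.
Qed.

Lemma prior_jobs_skp C' i : u < C' -> prior_jobs r s k t i -> skp_jobs r s k C' i.
Proof.
move=> uC Ai; have [hiu _ _] := prior_jobs_done Ai.
have nik := prior_jobs_neqk Ai; case/andP: Ai => ik /andP [si _].
by rewrite /skp_jobs /= modr_ne // si; lia.
Qed.

Lemma exec_gaps_split : gaps S (r s) u + gaps S t (r l) <= gaps S (r s) (r l).
Proof.
case: hP => _ _ hCl _; have htC := exec_before_cmax.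
have /andP [hsu _] := P_sched_busy hP (ltac:(by rewrite eu) : S u <> None).
rewrite (@gaps_cat S (r s) u (r l)) ?leq_add2l; try lia.
rewrite (@big_cat_nat _ _ _ t) /=; try lia.
apply: leq_trans (leq_addl _ _); rewrite gapsE leq_eqVlt; apply/orP; left; apply/eqP.
apply: eq_big_nat => x /andP [tx _]; rewrite /gap_start.
case: (eqVneq x t) => [->|nxt]; last by have -> : (x == r s) = false by apply/eqP; lia.
have -> : S t.-1 = Some k by apply: hin; lia.
by rewrite !orbT.
Qed.

Section Splice.

Variables (S2 : schedule) (C2 : nat).
Hypotheses (hS2 : skp_sched p r d s k (count_slots S k (r s) u) S2 C2) (huC2 : u < C2).
Hypotheses (hg2 : gaps S2 (r s) C2 <= gaps S (r s) u) (hmin : P_minimal p r d s k g l q).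

Let A := prior_jobs r s k t.
Let hAk i : A i -> 0 < i < k := @prior_jobs_ltk r s k t i.
Let hAJ i : A i -> i != k := @prior_jobs_neqk r s k t i.

Lemma prior_jobs_count_le i b : A i -> count_slots S2 i 0 b <= p i.
Proof.
by move=> Ai; have [hb _ _] := skp_sched_job_count hS2 (prior_jobs_skp huC2 Ai) (hAJ Ai).
Qed.

Section Fill.

Variable x0 : nat.
Hypotheses (hx0 : r s <= x0 <= t) (hx0C2 : x0 <= C2).
Local Notation N := (splice S2 S x0 t A p r k).

Lemma splice_fillP y : x0 <= y < t ->
  (N y = Some k /\ forall i, A i -> r i <= y -> p i <= count_slots N i 0 y) \/
  exists2 j, N y = Some j & [/\ A j, r j <= y, count_slots N j 0 y < p j &
      forall i, A i -> r i <= y -> count_slots N i 0 y < p i -> j <= i].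
Proof.
move=> hy; rewrite splice_fill //.
case: (@edf_pickP A p r k y (fun i => count_slots N i 0 y) hAk) => [[-> hall]|hj]; first by left.
by right; eexists.
Qed.

Hypothesis fill_slot : forall y, x0 <= y < t -> forall j, N y = Some j ->
  (j = k -> modr r s k k <= y) /\ (j <> k -> y < d j).

Lemma splice_slot y j : N y = Some j -> skp_jobs r s k C j /\ modr r s k j <= y < d j.
Proof.
have [_ hCd _ [h1 _ _]] := skp_schedP hS.
have [/andP [hsk hku] htC] := (exec_release, exec_before_cmax).
case/andP: hx0 => hsx0 hx0t.
move=> e; case: (ltnP y x0) => yx0.
  rewrite splice_prefix // in e; rewrite /skp_jobs /=.
  have [/andP [-> /andP [-> _]] /andP [hjy ->]] := skp_sched_slot hS2 e.
  by rewrite hjy /=; lia.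
case: (ltnP y t) => yt; last by rewrite splice_suffix // in e; apply: h1.
have [fk fo] := fill_slot (ltac:(lia) : x0 <= y < t) e.
case: (splice_fillP (ltac:(lia) : x0 <= y < t)) => [[ek _]|[j' ej' [Aj rj _ _]]].
  move: e; rewrite ek => -[ejk]; subst j; rewrite /skp_jobs /= fk // hsk /=.
  by case/andP: hk => -> _; lia.
move: e; rewrite ej' => -[ejj]; subst j'.
rewrite (prior_jobs_skp (ltac:(lia) : u < C) Aj) modr_ne ?hAJ // rj /=.
by split=> //; apply: fo => ejk; move: (hAJ Aj); rewrite ejk eqxx.
Qed.

Hypothesis prior_complete : forall i, A i -> count_slots N i 0 t = p i.

Lemma splice_count j : skp_jobs r s k C j -> j != k -> count_slots N j 0 (d j) = p j.
Proof.
have [_ _ _ [h1 h2 _]] := skp_schedP hS.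
case/andP: hx0 => _ hx0t; move=> Jj njk.
have sl2 x : N x = Some j -> x < d j by case/splice_slot => _ /andP [].
case: (boolP (A j)) => Aj.
  have [_ _ hsl] := prior_jobs_done Aj.
  have sl1 x : N x = Some j -> x < t.
    move=> e; rewrite ltnNge; apply/negP => tx; rewrite splice_suffix // in e.
    by have := hsl _ e; lia.
  rewrite -(@count_slots_until N j 0 (maxn t (d j)) (d j) sl2) ?leq_maxr //.
  by rewrite (count_slots_until _ sl1) ?leq_maxl // prior_complete.
have tj : t <= r j by rewrite leqNgt; apply: (contra _ Aj) => it; exact: skp_jobs_prior njk Jj it.
rewrite -(@count_slots_from0 N j (r j)); last first.
  by move=> x /splice_slot [_]; rewrite modr_ne // => /andP [].
rewrite -(modp_ne p q njk) -h2 // modr_ne //; apply: count_slots_ext => x /andP [hx _].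
by rewrite splice_suffix //; apply: leq_trans hx.
Qed.

Lemma splice_edf y j i : N y = Some j -> skp_jobs r s k C i -> i != k -> r i <= y ->
  count_slots N i 0 y < p i -> d j <= d i.
Proof.
have [_ _ _ [_ _ h3]] := skp_schedP hS.
have [_ _ _ [_ _ g3]] := skp_schedP hS2.
case/andP: hx0 => _ hx0t; move=> e Ji nik hri hc.
have hc' : count_slots N i (r i) y < p i.
  rewrite (@count_slots_from0 N i (r i)) // => x /splice_slot [_].
  by rewrite modr_ne // => /andP [].
case: (ltnP y x0) => yx0.
  rewrite splice_prefix // in e; have Ai : A i by apply: skp_jobs_prior Ji _; lia.
  apply: (g3 _ _ e i (prior_jobs_skp huC2 Ai)); rewrite modr_ne ?modp_ne //.
  rewrite (@count_slots_ext S2 N); first exact: hc'.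
  by move=> x /andP [_ xy]; rewrite splice_prefix //; lia.
case: (ltnP y t) => yt.
  have Ai : A i by apply: skp_jobs_prior Ji _; lia.
  case: (splice_fillP (ltac:(lia) : x0 <= y < t)) => [[_ hall]|[j' ej' [Aj _ _ hmn]]].
    by have := hall i Ai hri; lia.
  move: e; rewrite ej' => -[ejj]; subst j'.
  have ji := hmn i Ai hri hc; case/andP: (hAk Aj) => j0 _.
  by apply: (instance_d_mono inst j0 ji); have := hAk Ai; case/andP: hk => _; lia.
rewrite splice_suffix // in e; case: (ltnP (r i) t) => it.
  have Ai := skp_jobs_prior nik Ji it.
  by have := count_slots_mono N i 0 yt; rewrite prior_complete //; lia.
apply: (h3 _ _ e i Ji); rewrite modr_ne ?modp_ne //.
rewrite (@count_slots_ext S N); first exact: hc'.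
by move=> x /andP [hx _]; rewrite splice_suffix //; lia.
Qed.

Lemma splice_valid :
  valid_sched (modp p k (count_slots N k (modr r s k k) (d k))) (modr r s k) d
    (skp_jobs r s k C) N.
Proof.
have N0 j b : count_slots N j (modr r s k j) b = count_slots N j 0 b.
  by apply: count_slots_from0 => x /splice_slot [_ /andP []].
split.
- by move=> y j /splice_slot.
- move=> j Jj; case: (eqVneq j k) => [->|njk]; first by rewrite modp_k.
  by rewrite modp_ne // N0 splice_count.
- move=> y j e i Ji; case: (eqVneq i k) => [->|nik] hri hc.
    have [/andP [/andP [j0 jk] _] _] := splice_slot e.
    by apply: (instance_d_mono inst j0 jk); case/andP: hk.
  rewrite modr_ne // in hri; apply: (splice_edf e Ji nik hri).
  by rewrite -N0 -(modp_ne p (count_slots N k (modr r s k k) (d k)) nik).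
Qed.

Lemma splice_busy y : N y <> None -> r s <= y < C.
Proof.
case E: (N y) => [j|] // _; have [/andP [_ /andP [sj _]] /andP [hw _]] := splice_slot E.
rewrite (leq_trans sj hw) /=; case: (ltnP y t) => yt; first by have := exec_before_cmax; lia.
case/andP: hx0 => _ hx0t; rewrite splice_suffix // in E.
by have /andP [] := P_sched_busy hP (ltac:(by rewrite E) : S y <> None).
Qed.

Lemma splice_gaps_le : gaps N (r s) (r l) <= gaps S2 (r s) x0 + gaps S t (r l).
Proof.
case/andP: hx0 => hsx0 hx0t.
have htl : t <= r l by case: hP => _ _ hCl _; have := exec_before_cmax; lia.
rewrite (@gaps_cat N (r s) x0 (r l)); try lia.
rewrite (@big_cat_nat _ _ _ t) /=; try lia.
have -> : \sum_(x0 <= i < t) gap_start N (r s) i = 0.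
  rewrite big1_seq // => x; rewrite mem_index_iota => hx.
  by rewrite /gap_start splice_fill.
rewrite add0n; apply: leq_add.
  rewrite leq_eqVlt; apply/orP; left; apply/eqP; apply: eq_big_nat => x /andP [_ xx0].
  by rewrite /gap_start !splice_prefix //; lia.
rewrite gapsE big_nat_cond [X in _ <= X]big_nat_cond; apply: leq_sum => x /andP [/andP [tx _] _].
rewrite /gap_start splice_suffix //.
case: (eqVneq x t) => [->|nxt]; first by case: (S t == None) => //=; case: (_ || _).
have -> : (x == r s) = false by apply/eqP; lia.
by rewrite splice_suffix //; lia.
Qed.

Lemma splice_gaps : gaps N (r s) (r l) <= g.
Proof.
case: hP => _ _ _ hg.
apply: leq_trans splice_gaps_le _; apply: leq_trans (leq_trans exec_gaps_split hg).
by rewrite leq_add2r; apply: leq_trans (gaps_mono _ _ hx0C2) hg2.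
Qed.

Hypothesis k_saved :
  count_slots S2 k 0 x0 + count_slots N k x0 t < count_slots S k (r s) u + (t - u).

Lemma splice_k_lt : count_slots N k (modr r s k k) (d k) < q.
Proof.
have [busy hCd _ [_ h2 _]] := skp_schedP hS.
have [/andP [hsk hku] htC] := (exec_release, exec_before_cmax).
case/andP: hx0 => hsx0 hx0t.
have Jk : skp_jobs r s k C k by rewrite /skp_jobs /= hsk /=; case/andP: hk => -> _; lia.
rewrite -[X in _ < X](modp_k p k q) -(h2 _ Jk) (skp_count_from0 _ _ hS).
rewrite (@count_slots_from0 N k (modr r s k k)); last by move=> x /splice_slot [_ /andP []].
rewrite (@count_slots_cat N k 0 x0 (d k)) ?(@count_slots_cat N k x0 t (d k)) //; try lia.
rewrite (@count_slots_cat S k 0 u (d k)) ?(@count_slots_cat S k u t (d k)) //; try lia.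
rewrite (@count_slots_ext N S2 k 0 x0); last by move=> x /andP [_ hx]; apply: splice_prefix.
rewrite (@count_slots_ext N S k t (d k)); last by move=> x /andP [hx _]; apply: splice_suffix.
rewrite (@count_slots_const S k u t) // -(@count_slots_from0 S k (r s)); first lia.
by move=> x ex; have /andP [] := busy x ltac:(by rewrite ex).
Qed.

Lemma splice_contradiction : False.
Proof.
case: hP => _ hpr hCl _; have [_ hCd hsC _] := skp_schedP hS.
have [C' hPN] := P_sched_of_valid inst hk hsC hCd hCl hpr splice_busy splice_valid splice_gaps.
exact: hmin splice_k_lt _ _ hPN.
Qed.

End Fill.

Lemma no_longer_prefix_within_exec : C2 <= t -> False.
Proof.
move=> hC2t; have [/andP [hsk hku] htC] := (exec_release, exec_before_cmax).
set N := splice S2 S C2 t A p r k.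
have Adone i : A i -> count_slots N i 0 C2 = p i.
  move=> Ai; have [_ hC _] := skp_sched_job_count hS2 (prior_jobs_skp huC2 Ai) (hAJ Ai).
  by rewrite -hC; apply: count_slots_ext => x /andP [_ hx]; apply: splice_prefix.
have Nfill y : C2 <= y < t -> N y = Some k.
  move=> hy; case: (splice_fillP hy) => [[e _] //|[j _ [Aj _ cj _]]].
  rewrite -/N in cj; have := @count_slots_mono N j 0 C2 y ltac:(lia).
  by rewrite Adone //; lia.
apply: (@splice_contradiction C2) => //; rewrite -/N.
- by apply/andP; split; lia.
- by move=> y hy j; rewrite Nfill // => -[<-]; split=> // _; lia.
- move=> i Ai; rewrite (@count_slots_cat N i 0 C2 t) // Adone // count_slots_eq0 ?addn0 //.
  by move=> x hx; rewrite Nfill // => -[e]; move: (hAJ Ai); rewrite e eqxx.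
- rewrite (@count_slots_const N k C2 t) //.
  by have := skp_sched_k_count C2 hS2; lia.
Qed.

Let work_left (X : schedule) y := \sum_(1 <= i < k | A i) (p i - count_slots X i 0 y).
Let work_done (X : schedule) j y := \sum_(1 <= i < k | A i && (i <= j)) count_slots X i 0 y.

Section EdfFill.

Variable x0 : nat.
Hypotheses (hx0 : r s <= x0 <= t) (fill_start : x0 + work_left S2 x0 = t).
Local Notation N := (splice S2 S x0 t A p r k).

Lemma fill_count_le y i : y <= t -> A i -> count_slots N i 0 y <= p i.
Proof.
elim: y => [|y IH] hy Ai; first by rewrite /count_slots big_geq.
case: (ltnP y x0) => yx0.
  rewrite (@count_slots_ext N S2); first exact: prior_jobs_count_le.
  by move=> x /andP [_ xy]; apply: splice_prefix; lia.
rewrite count_slotsSr //; have := IH (ltnW hy) Ai.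
case: (splice_fillP (ltac:(lia) : x0 <= y < t)) => [[-> _]|[j -> [Aj _ cj _]]];
  case: eqP => [[eji]|_]; rewrite ?addn0 //.
  by move: (hAJ Ai); rewrite eji eqxx.
by subst j; rewrite addn1.
Qed.

(* If every released job of [A] is finished at [y], the remaining work of [A]
   is that of jobs released after [y], which [S] fits into [[y + 1, u)]. *)
Lemma fill_left_bound y : (forall i, A i -> r i <= y -> p i <= count_slots N i 0 y) ->
  work_left N y <= u - y.+1.
Proof.
move=> hall; apply: leq_trans (sum_count_slots_le S 1 k (fun i => A i && (y < r i)) y.+1 u).
rewrite /work_left big_mkcond [X in _ <= X]big_mkcond /=; apply: leq_sum => i _.
case Ai: (A i) => //=; case: (ltnP y (r i)) => yr.
  by rewrite (prior_jobs_count_from Ai yr) leq_subr.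
by rewrite (eqP (_ : p i - _ == 0)) // subn_eq0 hall.
Qed.

Lemma fill_pick_of_left y : x0 <= y < t -> work_left N y = t - y ->
  exists2 j, N y = Some j & [/\ A j, r j <= y, count_slots N j 0 y < p j &
    forall i, A i -> r i <= y -> count_slots N i 0 y < p i -> j <= i].
Proof.
move=> hy hleft; case: (splice_fillP hy) => [[_ hall]|//].
by have := fill_left_bound hall; lia.
Qed.

(* The fill never idles and never runs [k], so the remaining work of [A]
   decreases by one per slot. *)
Lemma fill_left y : x0 <= y <= t -> work_left N y = t - y.
Proof.
case/andP=> hy; rewrite -(subnKC hy); elim: (y - x0) => [|m IH] hm.
  rewrite addn0 -[in RHS]fill_start addKn; apply: eq_bigr => i _.
  by congr (_ - _); apply: count_slots_ext => x /andP [_ hx]; apply: splice_prefix.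
have [j ej [Aj _ _ _]] := fill_pick_of_left (ltac:(lia) : x0 <= x0 + m < t) (IH ltac:(lia)).
suff : work_left N (x0 + m) = work_left N (x0 + m).+1 + 1.
  by rewrite [x0 + m.+1]addnS; move: (IH ltac:(lia)); lia.
rewrite /work_left.
have -> : \sum_(1 <= i < k | A i) (p i - count_slots N i 0 (x0 + m)) =
          \sum_(1 <= i < k | A i) ((p i - count_slots N i 0 (x0 + m).+1) + (N (x0 + m) == Some i)).
  apply: eq_bigr => i Ai; have := fill_count_le (ltac:(lia) : (x0 + m).+1 <= t) Ai.
  rewrite count_slotsSr //; lia.
rewrite big_split /=; congr (_ + _); apply/eqP; rewrite eqn_leq sum_eq_Some_le1 /=.
have := @leq_term_sum (fun i => (N (x0 + m) == Some i) : nat) A 1 k j.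
by rewrite /= ej eqxx; apply=> //; have := hAk Aj; lia.
Qed.

Lemma fill_pick y : x0 <= y < t ->
  exists2 j, N y = Some j & [/\ A j, r j <= y, count_slots N j 0 y < p j &
    forall i, A i -> r i <= y -> count_slots N i 0 y < p i -> j <= i].
Proof. by move=> hy; apply: fill_pick_of_left => //; apply: fill_left; lia. Qed.

(* When the fill runs a job of index larger than [j], every released job of
   index at most [j] is already finished. *)
Lemma fill_work_done j y : x0 <= y <= t -> work_done S2 j y <= work_done N j y.
Proof.
have Wsucc X y' : work_done X j y'.+1 =
    work_done X j y' + \sum_(1 <= i < k | A i && (i <= j)) ((X y' == Some i) : nat).
  by rewrite /work_done -big_split /=; apply: eq_bigr => i _; rewrite count_slotsSr.
case/andP=> hy; rewrite -(subnKC hy); elim: (y - x0) => [|m IH] hm.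
  rewrite addn0 /work_done; apply: leq_sum => i _.
  by rewrite (@count_slots_ext N S2) // => x /andP [_ hx]; apply: splice_prefix.
have [js ej [Aj rj cj hmn]] := fill_pick (ltac:(lia) : x0 <= x0 + m < t).
rewrite addnS; case: (leqP js j) => hjs.
  rewrite !Wsucc; have := IH ltac:(lia).
  have := sum_eq_Some_le1 (S2 (x0 + m)) 1 k (fun i => A i && (i <= j)).
  have : 1 <= \sum_(1 <= i < k | A i && (i <= j)) ((N (x0 + m) == Some i) : nat).
    have := @leq_term_sum (fun i => (N (x0 + m) == Some i) : nat) (fun i => A i && (i <= j)) 1 k js.
    by rewrite /= Aj hjs ej eqxx; apply; have := hAk Aj; lia.
  lia.
rewrite /work_done; apply: leq_sum => i /andP [Ai ij].
case: (leqP (r i) (x0 + m)) => ri.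
  have hp : p i <= count_slots N i 0 (x0 + m).
    by rewrite leqNgt; apply/negP => lt; have := hmn i Ai ri lt; lia.
  by apply: leq_trans (prior_jobs_count_le _ Ai) (leq_trans hp (count_slots_mono _ _ _ _)).
rewrite (@count_slots_eq0 S2 i 0) // => x /andP [_ hx] e.
have [_ /andP [rx _]] := skp_sched_slot hS2 e; rewrite modr_ne ?hAJ // in rx; lia.
Qed.

Lemma fill_deadline y j : x0 <= y < t -> N y = Some j -> y < d j.
Proof.
move=> hy e; have [js ej [Aj rj cj hmn]] := fill_pick hy.
move: e; rewrite ej => -[ejj]; subst js.
rewrite ltnNge; apply/negP => djy.
set y' := maxn x0 (d j).
have hy' : y' <= y by rewrite geq_max; case/andP: hy => -> _.
have hjn : j <= n by have := hAk Aj; case/andP: hk => _; lia.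
have hsp : \sum_(1 <= i < k | A i && (i <= j)) p i <= work_done N j y'.
  apply: leq_trans (fill_work_done j (ltac:(lia) : x0 <= y' <= t)).
  rewrite /work_done; apply: leq_sum => i /andP [Ai ij].
  have [_ _ hdi] := skp_sched_job_count hS2 (prior_jobs_skp huC2 Ai) (hAJ Ai).
  rewrite -{1}hdi; apply: count_slots_mono; apply: leq_trans (leq_maxr x0 (d j)).
  by apply: (instance_d_mono inst _ ij hjn); case/andP: (hAk Ai).
have hz : \sum_(1 <= i < k | A i && (i <= j)) (p i - count_slots N i 0 y') = 0.
  rewrite sumnB; first by apply/eqP; rewrite subn_eq0.
  by move=> i /andP [Ai _]; apply: fill_count_le; lia.
have := @sum_eq0_term (fun i => p i - count_slots N i 0 y') (fun i => A i && (i <= j)) 1 k j hz.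
rewrite /= Aj leqnn => /(_ ltac:(have := hAk Aj; lia) isT).
have := @count_slots_mono N j 0 y' y hy'; lia.
Qed.

End EdfFill.

Lemma no_longer_prefix_beyond_exec : t < C2 -> False.
Proof.
move=> htC2; have [/andP [hsk hku] htC] := (exec_release, exec_before_cmax).
pose f y := y + work_left S2 y.
have fstep y : f y.+1 <= (f y).+1.
  rewrite /f /work_left -addSn leq_add2l; apply: leq_sum => i _.
  by apply: leq_sub2l; apply: count_slots_mono.
have frs : f (r s) <= u.
  have : work_left S2 (r s) <= u - r s.
    apply: leq_trans (sum_count_slots_le S 1 k A (r s) u); apply: leq_sum => i Ai.
    by rewrite prior_jobs_count_from ?leq_subr //; case/andP: Ai => _ /andP [].
  rewrite /f; lia.
have [x0 hx0 fx0] := @nat_ivt f (r s) t t fstep ltac:(lia) ltac:(lia) (leq_addr _ _).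
apply: (@splice_contradiction x0) => //.
- lia.
- move=> y hy j e; have [js ej [Aj _ _ _]] := fill_pick hx0 fx0 hy.
  rewrite ej in e; case: e => ejs; subst js.
  split=> [ejk|_]; last by have := fill_deadline hx0 fx0 hy ej.
  by move: (hAJ Aj); rewrite ejk eqxx.
- move=> i Ai; have := fill_left hx0 fx0 (ltac:(lia) : x0 <= t <= t); rewrite subnn => h0.
  have := @sum_eq0_term _ A 1 k i h0 (ltac:(have := hAk Ai; lia)) Ai.
  by have := fill_count_le hx0 fx0 (leqnn t) Ai; lia.
- rewrite (@count_slots_eq0 _ k x0 t); last first.
    move=> x hx e; have [js ej [Aj _ _ _]] := fill_pick hx0 fx0 hx.
    by rewrite e in ej; case: ej => ejs; move: (hAJ Aj); rewrite -ejs eqxx.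
  by have := skp_sched_k_count x0 hS2; lia.
Qed.

End Splice.

Hypothesis hint : S u.-1 <> None \/ u = r s.

Lemma truncate_valid :
  valid_sched (modp p k (count_slots S k (r s) u)) (modr r s k) d (skp_jobs r s k u)
    (truncate S u).
Proof.
have [busy hCd _ [h1 h2 h3]] := skp_schedP hS.
have Sub x : truncate S u x <> None -> x < u by rewrite /truncate; case: ltnP.
have SuS j x : truncate S u x = Some j -> S x = Some j by rewrite /truncate; case: ltnP.
have [/andP [hsk hku] htC] := (exec_release, exec_before_cmax).
split.
- move=> x j e; rewrite /skp_jobs.
  have [/andP [-> /andP [-> _]] /andP [hw ->]] := h1 _ _ (SuS _ _ e).
  by rewrite hw (leq_ltn_trans hw) // Sub // e.
- move=> j Jj; case: (eqVneq j k) => [->|njk].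
    have ud : u <= d k by lia.
    have slk x : truncate S u x = Some k -> x < u by move=> e; apply: Sub; rewrite e.
    rewrite modp_k (count_slots_until _ slk ud).
    rewrite (count_slots_ext (S' := S)); last by move=> x /andP [_ xu]; rewrite /truncate xu.
    rewrite (@count_slots_from0 S k (modr r s k k)); last by move=> x /h1 [_ /andP []].
    rewrite (@count_slots_from0 S k (r s)) // => x ex.
    by have /andP [] := busy x ltac:(by rewrite ex).
  move: Jj; rewrite /skp_jobs modr_ne // => /andP [/andP [j0 jk] /andP [sj ju]].
  have [_ hcu hsl] := prior_jobs_done (ltac:(rewrite /prior_jobs; lia) : prior_jobs r s k t j).
  have JjC : skp_jobs r s k C j by rewrite /skp_jobs modr_ne // j0 jk sj /=; lia.
  rewrite modp_ne // -(modp_ne p q njk) -h2 // modr_ne //.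
  apply: eq_count_slots => x _; rewrite /truncate; case: ltnP => // ux.
  by case: (S x =P Some j) => [ex|_]; [have := hsl _ ex; lia | by []].
- move=> x j e i Ji hri; case: (eqVneq i k) => [->|nik] hc.
    have [/andP [/andP [j0 jk] _] _] := h1 _ _ (SuS _ _ e).
    by apply: (instance_d_mono inst j0 jk); case/andP: hk.
  have xu := Sub x ltac:(by rewrite e).
  move: Ji; rewrite /skp_jobs => /andP [i0 /andP [si iu]].
  apply: (h3 _ _ (SuS _ _ e)) => //; first by rewrite /skp_jobs i0 si /=; lia.
  move: hc; rewrite !modp_ne // (count_slots_ext (S' := S)) // => y /andP [_ yx].
  by rewrite /truncate (ltn_trans yx xu).
Qed.

Lemma truncate_skp_sched :
  skp_sched p r d s k (count_slots S k (r s) u) (truncate S u) u /\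
  gaps (truncate S u) (r s) u = gaps S (r s) u.
Proof.
have [busy hCd _ _] := skp_schedP hS.
have [/andP [hsk hku] htC] := (exec_release, exec_before_cmax).
split.
- split; last by apply: valid_sched_eq_jobs truncate_valid => j; rewrite /skp_jobs modr_s.
  + rewrite modr_s; split; first by move=> x; rewrite /truncate; case: ltnP.
    case: (eqVneq u (r s)) => [eus|nus].
      left; split=> // x; rewrite /truncate; case: ltnP => // xu.
      by case E: (S x) => [j|] //; have := busy x ltac:(by rewrite E); lia.
    have hu0 : 0 < u by move/eqP: nus; lia.
    right; split=> //; rewrite /truncate (prednK hu0) leqnn.
    by case: hint => // e; rewrite e eqxx in nus.
  + lia.
- apply: eq_big_nat => x /andP [_ xu]; rewrite /gap_start /truncate xu.
  by case: x xu => [|x] xu /=; [rewrite xu | rewrite (ltnW xu)].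
Qed.

End ExecInterval.

Unset Implicit Arguments.

Theorem lemma10 (n : nat) (p r d : nat -> nat) (s k g l q : nat)
  (S : schedule) (C : nat) :
  instance n p r d ->
  1 <= s <= n -> 1 <= k <= n -> 1 <= l <= k.-1 -> r s <= r l ->
  IsP p r d s k g l q ->
  P_sched p r d s k g l q S C ->
  ((forall u v, exec_interval S k u v -> internal S (r s) (r l) u v) /\
   (0 < q -> gaps S (r s) (r l) = g)) /\
  (forall u t, exec_interval S k u t ->
     IsU p r d s k (gaps S (r s) u) (count_slots S k (r s) u) u).
Proof.
move=> inst _ hk _ _ [_ hmin] hP.
have hint := P_minimal_internal inst hk hmin hP.
split; first by split; [exact: hint | exact: P_minimal_gaps inst hk hmin hP].
move=> u t hex; have [hut hin _ _] := hex; have [_ hstart] := hint u t hex.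
have [hSu hgu] := truncate_skp_sched inst hk hP hut hin hstart.
split; first by exists (truncate S u); rewrite hgu.
move=> S2 C2 hS2 hg2; rewrite leqNgt; apply/negP => huC2.
case: (leqP C2 t) => hC2t.
- exact: (no_longer_prefix_within_exec inst hk hP hut hin hS2 huC2 hg2 hmin hC2t).
- exact: (no_longer_prefix_beyond_exec inst hk hP hut hin hS2 huC2 hg2 hmin hC2t).
Qed.
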